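(* There is an absolute constant $K$ such that for every integer $c \ge 0$ there is a deterministic finite automaton over the alphabet $\{0,1\}\times\{0,1\}$, reading its input most significant digit first, with at most $K\max(1,\log c)$ states (not counting a dead state), which accepts a word $x \times y$ (with $x,y$ valid Fibonacci representations of the same length) if and only if $[x] + c = [y]$.
   Context: Fibonacci numbers: $F_0=0$, $F_1=1$, $F_k=F_{k-1}+F_{k-2}$. For a binary word $x = x_1\cdots x_\ell$, $[x] = \sum_{j=1}^{\ell} x_j F_{\ell-j+2}$. A valid Fibonacci representation is a binary word with no factor $11$; leading zeros are allowed. For words $x=x_1\cdots x_\ell$, $y=y_1\cdots y_\ell$ of equal length, $x\times y$ denotes the word $(x_1,y_1)\cdots(x_\ell,y_\ell)$ over $\{0,1\}^2$; the shorter of two representations is padded with leading zeros. Transition functions may be partial; a dead state (from which no accepting state is reachable) is not counted. *)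

From mathcomp Require Import all_boot.
From Stdlib Require Import Reals.
Set Implicit Arguments. Unset Strict Implicit. Unset Printing Implicit Defensive.

Fixpoint fib (n : nat) : nat :=
  match n with
  | 0 => 0
  | S m => match m with 0 => 1 | S k => fib m + fib k end
  end.

(* [x] = sum_{j=1}^{l} x_j F_{l-j+2}, most significant digit first. *)
Fixpoint fibval (x : seq bool) : nat :=
  match x with
  | [::] => 0
  | b :: x' => (if b then fib (size x' + 2) else 0) + fibval x'
  end.

(* valid Fibonacci representation: no factor 11 (leading zeros allowed) *)
Definition fib_valid (x : seq bool) : bool := ~~ infix [:: true; true] x.

(* A DFA with n states (the states 'I_n), a start state, a partial
   transition function over the alphabet {0,1} x {0,1} (None = move to the
   uncounted dead state), and a set of accepting states. *)
Fixpoint dfa_run (n : nat) (delta : 'I_n -> bool * bool -> option 'I_n)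
  (q : option 'I_n) (w : seq (bool * bool)) : option 'I_n :=
  match w with
  | [::] => q
  | a :: w' => dfa_run delta (obind (fun p => delta p a) q) w'
  end.

Definition dfa_accepts (n : nat) (s : 'I_n)
  (delta : 'I_n -> bool * bool -> option 'I_n) (acc : {set 'I_n})
  (w : seq (bool * bool)) : bool :=
  match dfa_run delta (Some s) w with
  | Some q => q \in acc
  | None => false
  end.

(* Read x * y from the most significant digit and, with m digits still to
   come, keep the pair (A, B) for which
     [y] - [x] = A F(m+2) + B F(m+1) + ([y'] - [x'])
   where x', y' are the unread suffixes.  A digit pair (a, b) updates it to
   (A + B + b - a, A), and at the end [y] - [x] = A + B.  Each step multiplies
   A - phi B by 1 - phi and adds a digit difference, so |A - phi B| <= 3
   throughout.  Suffix values lie in [0, F(m+3)), so on an accepted word the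
   weight A F(m+2) + B F(m+1) stays within F(m+3) of c, which pins B to within
   4 of c / phi^(m+2) and then A to within 3 of phi B.  Once m exceeds
   2 log2 c the ratio c / phi^(m+2) is below 1, so 80 candidate pairs for
   each level m <= 2 log2 c contain every pair that can still lead to
   acceptance: the automaton on these pairs, dying when it leaves them and
   accepting when A + B = c, has O(log c) states. *)

From mathcomp Require Import all_boot zify ssrZ.
From Stdlib Require Import Reals ZArith Lia Lra.

Set Implicit Arguments.
Unset Strict Implicit.
Unset Printing Implicit Defensive.

Lemma fibSS n : fib n.+2 = fib n.+1 + fib n.
Proof. by []. Qed.

Arguments fib : simpl never.

Lemma leq_fib m n : m <= n -> fib m <= fib n.
Proof.
move=> le_mn; rewrite -(subnK le_mn); elim: (n - m) => [|d IH] //.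
rewrite addSn; apply: leq_trans IH _; case: (d + m) => [|[|k]] //.
by rewrite (fibSS k.+1) leq_addr.
Qed.

Lemma fib_gt0 n : 0 < fib n.+1.
Proof. exact: (@leq_fib 1 n.+1). Qed.

Lemma expn2_le_fib k : expn 2 k <= fib (2 * k).+1.
Proof.
elim: k => [|k IH] //; rewrite (_ : (2 * k.+1).+1 = (2 * k).+3); last by lia.
have := @leq_fib (2 * k).+1 (2 * k).+2 (leqnSn _).
rewrite expnS (fibSS (2 * k).+1); lia.
Qed.

Lemma fibval_lt u : fibval u < fib (size u + 3).
Proof.
elim: u => [|b u IH] //=.
rewrite (_ : (size u).+1 + 3 = (size u + 2).+2); last by lia.
rewrite fibSS (_ : (size u + 2).+1 = size u + 3); last by lia.
case: b; lia.
Qed.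

Lemma take_zip (S T : Type) (s : seq S) (t : seq T) k :
  take k (zip s t) = zip (take k s) (take k t).
Proof.
elim: s t k => [|x s IH] [|y t] [|k] //=; try by rewrite IH.
all: by case: take.
Qed.

Local Notation fibZ k := (Z.of_nat (fib k)).

Lemma fibZSS n : fibZ n.+2 = (fibZ n.+1 + fibZ n)%Z.
Proof. by rewrite fibSS Nat2Z.inj_add. Qed.

Definition carry_step (p : Z * Z) (a : bool * bool) : Z * Z :=
  (p.1 + p.2 + (Z.b2z a.2 - Z.b2z a.1), p.1)%Z.

Definition carry (w : seq (bool * bool)) : Z * Z := foldl carry_step (0, 0)%Z w.

Definition carry_weight (p : Z * Z) (m : nat) : Z :=
  (p.1 * fibZ (m + 2) + p.2 * fibZ (m + 1))%Z.

Lemma carry_weight_step p a b m :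
  (carry_weight p m.+1 + (Z.b2z b - Z.b2z a) * fibZ (m + 2))%Z =
  carry_weight (carry_step p (a, b)) m.
Proof.
rewrite /carry_weight /= (_ : m.+1 + 2 = (m + 1).+2) ?fibZSS; last by lia.
by rewrite addSnnS (_ : (m + 1).+1 = m + 2); [ring | lia].
Qed.

Lemma carry_weight_foldl p x1 y1 x2 y2 :
  size x1 = size y1 -> size x2 = size y2 ->
  (carry_weight p (size x1 + size x2)
     + Z.of_nat (fibval (y1 ++ y2)) - Z.of_nat (fibval (x1 ++ x2)))%Z =
  (carry_weight (foldl carry_step p (zip x1 y1)) (size x2)
     + Z.of_nat (fibval y2) - Z.of_nat (fibval x2))%Z.
Proof.
move=> + eq_size2; elim: x1 y1 p => [|a x1 IH] [|b y1] //= p [eq_size1].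
rewrite -IH // -carry_weight_step !size_cat -eq_size1 -eq_size2 addSn.
by case: a; case: b; rewrite ?Nat2Z.inj_add /Z.b2z; lia.
Qed.

Lemma fibval_sub_carry x y : size x = size y ->
  (Z.of_nat (fibval y) - Z.of_nat (fibval x))%Z =
  ((carry (zip x y)).1 + (carry (zip x y)).2)%Z.
Proof.
move=> eq_size; have := @carry_weight_foldl (0, 0)%Z x y [::] [::] eq_size erefl.
by rewrite !cats0 /carry /carry_weight /=; lia.
Qed.

Lemma carry_prefix_close c x y k : size x = size y -> fibval x + c = fibval y ->
  (- fibZ (size (drop k x) + 3)
     <= Z.of_nat c - carry_weight (carry (take k (zip x y))) (size (drop k x))
     <= fibZ (size (drop k x) + 3))%Z.
Proof.
move=> eq_size eq_val.
have eq_size1 : size (take k x) = size (take k y) by rewrite !size_take eq_size.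
have eq_size2 : size (drop k x) = size (drop k y) by rewrite !size_drop eq_size.
have := carry_weight_foldl (0, 0)%Z eq_size1 eq_size2.
rewrite !cat_take_drop take_zip /carry /carry_weight /=.
have := fibval_lt (drop k x); have := fibval_lt (drop k y); rewrite -eq_size2.
lia.
Qed.

Section GoldenRatio.
Local Open Scope R_scope.

Definition phi : R := (1 + sqrt 5) / 2.

Lemma phi_sq : phi * phi = phi + 1.
Proof. have := sqrt_sqrt 5 ltac:(lra); rewrite /phi; nra. Qed.

Lemma phi_bounds : 1.6 <= phi <= 1.62.
Proof. have := sqrt_sqrt 5 ltac:(lra); have := sqrt_pos 5; rewrite /phi; nra. Qed.

Definition near_golden (p : Z * Z) : Prop := -3 <= IZR p.1 - phi * IZR p.2 <= 3.

(* [A + B + d - phi A = (1 - phi) (A - phi B) + d] and [|1 - phi| < 0.62],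
   so the band [|A - phi B| <= 3] is invariant when [|d| <= 1]. *)
Lemma near_golden_step p a : near_golden p -> near_golden (carry_step p a).
Proof.
case: p => A B; rewrite /near_golden /= => near_AB.
have d_bound : -1 <= IZR (Z.b2z a.2 - Z.b2z a.1) <= 1.
  by case: a.1; case: a.2; simpl; lra.
move: (Z.b2z _ - _)%Z d_bound => d d_bound; rewrite !plus_IZR.
have -> : IZR A + IZR B + IZR d - phi * IZR A =
          (1 - phi) * (IZR A - phi * IZR B) + IZR d.
  have phi2B : phi * phi * IZR B = phi * IZR B + IZR B by rewrite phi_sq; ring.
  lra.
have := phi_bounds; nra.
Qed.

Lemma near_golden0 : near_golden (0, 0)%Z.
Proof. by rewrite /near_golden /= Rmult_0_r; lra. Qed.

Lemma near_golden_foldl p w : near_golden p -> near_golden (foldl carry_step p w).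
Proof. by elim: w p => [|a w IH] p //= /(near_golden_step a); apply: IH. Qed.

End GoldenRatio.

Section CarryStates.
Local Open Scope R_scope.

(* [level_scale t = phi^(t+2)]; a pair [(A, B)] with [A ~ phi B] has weight
   [carry_weight (A, B) t ~ B * level_scale t], so the pairs of weight close
   to [c] have [B ~ level_ratio c t]. *)
Definition level_scale (t : nat) : R := phi * IZR (fibZ (t + 2)) + IZR (fibZ (t + 1)).

Definition level_ratio (c t : nat) : R := IZR (Z.of_nat c) / level_scale t.

(* Index [80 t + 8 j + i] encodes level [t], [B] the [j]-th of ten integers
   around [level_ratio c t] and [A] the [i]-th of eight integers around [phi B]. *)
Definition carry_candidate (c k : nat) : Z * Z :=
  let B := (up (level_ratio c (k %/ 80)) - 5 + Z.of_nat (k %% 80 %/ 8))%Z in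
  ((up (phi * IZR B) - 4 + Z.of_nat (k %% 8))%Z, B).

Definition carry_states (c M : nat) : seq (Z * Z) := mkseq (carry_candidate c) (80 * M.+1).

Lemma fibZ_ge0 k : 0 <= IZR (fibZ k).
Proof. by apply: IZR_le; lia. Qed.

Lemma fibZ_ge1 k : 1 <= IZR (fibZ k.+1).
Proof. by apply: IZR_le; have := fib_gt0 k; lia. Qed.

Lemma level_scale_ge t : IZR (fibZ (t + 3)) <= level_scale t.
Proof.
rewrite (_ : t + 3 = (t + 1).+2)%nat ?fibZSS ?plus_IZR; last by lia.
rewrite /level_scale (_ : (t + 1).+1 = t + 2)%nat; last by lia.
have := phi_bounds; have := fibZ_ge0 (t + 2); nra.
Qed.

Lemma level_scale_gt0 t : 0 < level_scale t.
Proof.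
have := level_scale_ge t; have := fibZ_ge1 (t + 2).
by rewrite (_ : (t + 2).+1 = t + 3)%nat; [lra | lia].
Qed.

Lemma level_ratioK c t : level_ratio c t * level_scale t = IZR (Z.of_nat c).
Proof. by rewrite /level_ratio; field; have := level_scale_gt0 t; lra. Qed.

Lemma level_ratio_close p c t : near_golden p ->
  (- fibZ (t + 3) <= Z.of_nat c - carry_weight p t <= fibZ (t + 3))%Z ->
  -4 <= IZR p.2 - level_ratio c t <= 4.
Proof.
case: p => A B; rewrite /near_golden /carry_weight /= => near_AB [/IZR_le lo /IZR_le hi].
rewrite !minus_IZR !plus_IZR !mult_IZR opp_IZR in lo hi.
rewrite -(level_ratioK c t) in lo hi.
move: (level_scale_ge t) (level_scale_gt0 t) (fibZ_ge0 (t + 2)) (fibZ_ge0 (t + 1)) lo hi.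
rewrite /level_scale.
move: (level_ratio c t) (IZR (fibZ (t + 3))) (IZR (fibZ (t + 2))) (IZR (fibZ (t + 1))).
move=> Q F3 F2 F1 scale_ge scale_gt0 F2_ge0 F1_ge0 lo hi.
have phi_bds := phi_bounds.
have err : -3 * F2 <= (IZR A - phi * IZR B) * F2 <= 3 * F2 by split; nra.
have eq_diff : (IZR B - Q) * (phi * F2 + F1) =
  - (Q * (phi * F2 + F1) - (IZR A * F2 + IZR B * F1)) - (IZR A - phi * IZR B) * F2.
  by ring.
have : - 4 * (phi * F2 + F1) <= (IZR B - Q) * (phi * F2 + F1) <= 4 * (phi * F2 + F1).
  by rewrite eq_diff; nra.
move: (IZR B - Q) (phi * F2 + F1) scale_gt0 => e s s_gt0 [e_lo e_hi].
split; nra.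
Qed.

Lemma mem_carry_states c M t A B : (t <= M)%nat -> near_golden (A, B) ->
  -5 < IZR B - level_ratio c t < 5 -> (A, B) \in carry_states c M.
Proof.
rewrite /near_golden /= => le_tM near_AB [B_lo B_hi].
have [u_gt u_le] := archimed (level_ratio c t).
have [v_gt v_le] := archimed (phi * IZR B).
set u := up (level_ratio c t) in u_gt u_le *.
set v := up (phi * IZR B) in v_gt v_le *.
have B_ge : (u - 6 < B)%Z by apply: lt_IZR; rewrite minus_IZR; lra.
have B_lt : (B < u + 5)%Z by apply: lt_IZR; rewrite plus_IZR; lra.
have A_ge : (v - 4 <= A)%Z by apply: le_IZR; rewrite minus_IZR; lra.
have A_lt : (A < v + 3)%Z by apply: lt_IZR; rewrite plus_IZR; lra.
pose j := Z.to_nat (B - (u - 5)); pose i := Z.to_nat (A - (v - 4)).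
have k_lt : (80 * t + 8 * j + i < 80 * M.+1)%nat by rewrite /j /i; lia.
apply/(nthP (0, 0)%Z); exists (80 * t + 8 * j + i)%nat; first by rewrite size_mkseq.
rewrite nth_mkseq // /carry_candidate.
have -> : ((80 * t + 8 * j + i) %/ 80 = t)%nat by lia.
have -> : ((80 * t + 8 * j + i) %% 80 %/ 8 = j)%nat by lia.
have -> : ((80 * t + 8 * j + i) %% 8 = i)%nat by lia.
rewrite -/u (_ : (u - 5 + Z.of_nat j)%Z = B) -/v; last by rewrite /j; lia.
by rewrite (_ : (v - 4 + Z.of_nat i)%Z = A) //; rewrite /i; lia.
Qed.

Lemma level_ratio_small c t : (c < fib (t + 3))%nat -> 0 <= level_ratio c t < 1.
Proof.
move=> lt_c; have scale_ge := level_scale_ge t; have scale_gt0 := level_scale_gt0 t.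
have c_lt : IZR (Z.of_nat c) + 1 <= IZR (fibZ (t + 3)).
  by rewrite -plus_IZR; apply: IZR_le; lia.
have c_ge0 : 0 <= IZR (Z.of_nat c) by apply: IZR_le; lia.
have := level_ratioK c t; split; nra.
Qed.

(* Above level [M] the ratio is below 1 anyway, so such pairs are caught by
   the candidates of level [M]. *)
Lemma mem_carry_states_close c M p m : (c < fib (M + 3))%nat -> near_golden p ->
  (- fibZ (m + 3) <= Z.of_nat c - carry_weight p m <= fibZ (m + 3))%Z ->
  p \in carry_states c M.
Proof.
move=> lt_c near_p close; have [lo hi] := level_ratio_close near_p close.
case: p near_p {close} lo hi => A B /= near_AB lo hi.
have [le_mM | lt_Mm] := leqP m M; first by apply: (mem_carry_states le_mM) => //; lra.
apply: (mem_carry_states (leqnn M)) => //.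
have lt_c' : (c < fib (m + 3))%nat by apply: leq_trans lt_c (leq_fib _); lia.
have := level_ratio_small lt_c; have := level_ratio_small lt_c'; lra.
Qed.

End CarryStates.

Lemma dfa_run_dead n (delta : 'I_n -> bool * bool -> option 'I_n) w :
  dfa_run delta None w = None.
Proof. by elim: w. Qed.

Section ListAutomaton.
Variables (T : eqType) (f : T -> bool * bool -> T) (S : seq T) (x0 : T).

Definition list_delta (i : 'I_(size S)) (a : bool * bool) : option 'I_(size S) :=
  insub (index (f (nth x0 S i) a) S).

Lemma list_delta_some i a j :
  list_delta i a = Some j -> nth x0 S j = f (nth x0 S i) a.
Proof.
rewrite /list_delta; case: insubP => [k mem_k val_k [<-] | //].
by rewrite -[nat_of_ord k]/(val k) val_k nth_index // -index_mem.
Qed.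

Lemma list_run_some w (i j : 'I_(size S)) :
  dfa_run list_delta (Some i) w = Some j -> nth x0 S j = foldl f (nth x0 S i) w.
Proof.
elim: w i => [|a w IH] i /=; first by case=> ->.
case delta_i: (list_delta i a) => [k|]; last by rewrite dfa_run_dead.
by move/IH ->; rewrite (list_delta_some delta_i).
Qed.

Lemma list_run_total w (i : 'I_(size S)) :
  (forall k, foldl f (nth x0 S i) (take k w) \in S) ->
  exists j, dfa_run list_delta (Some i) w = Some j.
Proof.
elim: w i => [|a w IH] i prefix_mem /=; first by exists i.
have mem_a := prefix_mem 1%nat; rewrite /= take0 /= in mem_a.
have lt_a : index (f (nth x0 S i) a) S < size S by rewrite index_mem.
have -> : list_delta i a = Some (Ordinal lt_a) by rewrite /list_delta insubT.
by apply: IH => k; rewrite /= nth_index //; apply: (prefix_mem k.+1).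
Qed.

Variable P : pred T.

Definition list_accepting : {set 'I_(size S)} := [set i : 'I_(size S) | P (nth x0 S i)].

Lemma list_accepts_sound (s : 'I_(size S)) w :
  dfa_accepts s list_delta list_accepting w -> P (foldl f (nth x0 S s) w).
Proof.
rewrite /dfa_accepts; case run_w: dfa_run => [j|] //.
by rewrite inE (list_run_some run_w).
Qed.

Lemma list_accepts_complete (s : 'I_(size S)) w :
  (forall k, foldl f (nth x0 S s) (take k w) \in S) ->
  P (foldl f (nth x0 S s) w) -> dfa_accepts s list_delta list_accepting w.
Proof.
move=> /list_run_total [j run_w]; rewrite /dfa_accepts run_w inE.
by rewrite (list_run_some run_w).
Qed.

End ListAutomaton.

Arguments list_delta {T} f S x0 i a.

Lemma lt_fib_trunc_log c : c < fib (2 * trunc_log 2 c + 3).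
Proof.
apply: leq_trans (trunc_log_ltn c (isT : 1 < 2)) _.
by rewrite (_ : 2 * trunc_log 2 c + 3 = (2 * (trunc_log 2 c).+1).+1) ?expn2_le_fib //; lia.
Qed.

Lemma INR_expn m n : INR (expn m n) = (INR m ^ n)%R.
Proof. by elim: n => [|n IH] //; rewrite expnS mult_INR IH. Qed.

Lemma trunc_log2_le_ln c : (INR (trunc_log 2 c) <= 2 * Rmax 1 (ln (INR c)))%R.
Proof.
have max_ge := Rmax_l 1 (ln (INR c)); have max_ge' := Rmax_r 1 (ln (INR c)).
have [c0 | c_gt0] := posnP c; first by move: max_ge; rewrite c0 trunc_log0 /=; lra.
have pow_le : (2 ^ trunc_log 2 c <= INR c)%R.
  by rewrite -[2%R]/(INR 2) -INR_expn; apply/le_INR/leP/trunc_logP.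
have : (INR (trunc_log 2 c) * ln 2 <= ln (INR c))%R.
  rewrite -ln_pow; last lra.
  have [lt_pow | ->] := Rle_lt_or_eq_dec _ _ pow_le; last exact: Rle_refl.
  by apply/Rlt_le/ln_increasing => //; apply: pow_lt; lra.
have := Rmult_le_compat_l _ _ _ (pos_INR (trunc_log 2 c)) (Rlt_le _ _ ln_lt_2).
lra.
Qed.

Lemma size_carry_states_le c :
  (INR (size (carry_states c (2 * trunc_log 2 c))) <= 400 * Rmax 1 (ln (INR c)))%R.
Proof.
rewrite size_mkseq (_ : 80 * _ = 160 * trunc_log 2 c + 80)%nat; last by lia.
have E160 : INR 160 = 160%R by rewrite INR_IZR_INZ.
have E80 : INR 80 = 80%R by rewrite INR_IZR_INZ.
rewrite plus_INR mult_INR E160 E80.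
have := trunc_log2_le_ln c; have := Rmax_l 1 (ln (INR c)).
lra.
Qed.

Lemma zero_mem_carry_states c M : c < fib (M + 3) -> (0, 0)%Z \in carry_states c M.
Proof.
move=> lt_c; apply: (mem_carry_states_close (m := M)) near_golden0 _ => //.
by rewrite /carry_weight /=; lia.
Qed.

Lemma carry_prefix_mem c M x y : c < fib (M + 3) ->
  size x = size y -> fibval x + c = fibval y ->
  forall k, carry (take k (zip x y)) \in carry_states c M.
Proof.
move=> lt_c eq_size eq_val k.
exact: mem_carry_states_close lt_c (near_golden_foldl _ near_golden0)
         (carry_prefix_close k eq_size eq_val).
Qed.

Theorem theorem5 :
  exists K : R,
    forall c : nat,
      exists (n : nat) (s : 'I_n) (delta : 'I_n -> bool * bool -> option 'I_n)
             (acc : {set 'I_n}),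
        (INR n <= K * Rmax 1 (ln (INR c)))%R /\
        forall x y : seq bool,
          size x = size y -> fib_valid x -> fib_valid y ->
          (dfa_accepts s delta acc (zip x y) <-> fibval x + c = fibval y).
Proof.
exists 400%R => c; set S := carry_states c (2 * trunc_log 2 c).
have lt_start : index (0, 0)%Z S < size S.
  by rewrite index_mem zero_mem_carry_states // lt_fib_trunc_log.
have start0 : nth (0, 0)%Z S (Ordinal lt_start) = (0, 0)%Z.
  by rewrite nth_index // -index_mem.
exists (size S), (Ordinal lt_start), (list_delta carry_step S (0, 0)%Z),
  (list_accepting S (0, 0)%Z [pred p | (p.1 + p.2 == Z.of_nat c)%Z]).
split; first exact: size_carry_states_le.
move=> x y eq_size _ _; have diff_xy := fibval_sub_carry eq_size.
split=> [/list_accepts_sound | eq_val].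
  by rewrite start0 => /eqP; rewrite -/(carry _); lia.
apply: list_accepts_complete; rewrite start0.
  exact: carry_prefix_mem (lt_fib_trunc_log c) eq_size eq_val.
by apply/eqP; rewrite -/(carry _) -diff_xy; lia.
Qed.
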